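(* Under the setting, model (M) and assumptions (A1)–(A4) described in the context, fix $s\in S$, $h_q\in\mathcal H$, let $B=\big(E[\hat h(s,h_q)]-g(s,h_q)E[\hat f(s,h_q)]\big)/E[\hat f(s,h_q)]$, and suppose $\liminf_{NT\to\infty}E[\hat f(s,h_q)]>0$. Then $\hat g(s,h_q)-g(s,h_q)-B\to 0$ in probability as $NT\to\infty$.
   Context: Setting. For each $N$ (number of nodes) and $T$ (number of timesteps) one observes random directed graphs $G_1,\dots,G_T$ on $\{1,\dots,N\}$; $p\ge1$ is a fixed lag, constant in $N,T$. The local neighborhood $N_t(i)$ of node $i$ in $G_t$ is the set of nodes within 2 hops of $i$ with all edges among them. Each node pair $(i,j)$ at time $t$ has a pair-feature $g_t(i,j)$ in a fixed finite set $S$. For $s\in S$, $n_{i,t}(s)$ is the number of node pairs in $N_t(i)$ with pair-feature $s$ at time $t$, and $n^+_{i,t}(s)$ the number of those joined by an edge at time $t+1$. The datacube of $i$ at time $t$ is $h_{i,t}=\{(n_{i,t-1}(s),n^+_{i,t-1}(s)):s\in S\}$. Model (M): there is an unknown $g:S\times\mathcal H\to[0,1]$ with $E[n^+_{i,t+1}(s)\mid h_{i,t},n_{i,t+1}(s)]=n_{i,t+1}(s)g(s,h_{i,t})$. Kernel: $K_b(h,h')=b^{D(h,h')}$, $0<b<1$, with $D\ge0$ the sum over $s\in S$ of total variation distances between $\mathcal N(\hat p_s,\hat p_s(1-\hat p_s)/n(s))$ and $\mathcal N(\hat p'_s,\hat p'_s(1-\hat p'_s)/n'(s))$, $\hat p_s=n^+(s)/n(s)$;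 assumed $D(h,h')=0$ iff $h=h'$. Estimator: $\hat h(s,h_q)=\frac{1}{N(T-p-2)}\sum_{t=p}^{T-2}\sum_{i=1}^N K_b(h_{i,t},h_q)n^+_{i,t+1}(s)$, $\hat f(s,h_q)=\frac{1}{N(T-p-2)}\sum_{t=p}^{T-2}\sum_{i=1}^N K_b(h_{i,t},h_q)n_{i,t+1}(s)$, $\hat g=\hat h/\hat f$ (when $\hat f>0$). (A1): neighborhood sizes bounded by $M$ independent of $N,T$, so datacubes and counts lie in a fixed finite set ($\mathcal H$ = set of possible datacubes). (A2): $b=b_{N,T}\to0$ as $NT\to\infty$. Stacked graph and distance: stack $G_1,\dots,G_T$, joining node $i$ at time $t$ to node $i$ at times $t\pm1$; $\mathrm{dist}((i,t),(i',t'))$ is the shortest-path length in the stacked graph between any node of the datacube of $(i,t)$ and any node of that of $(i',t')$. (A3) Strong mixing: $\alpha(k)=\sup\{|P(A\cap B)-P(A)P(B)|:A\in\mathcal F(i,t),B\in\mathcal F(i',t'),\mathrm{dist}\ge k\}$, where $\mathcal F(i,t)$ is generated by the datacube of $(i,t)$ and its associated counts, $\alpha$ independent of $N,T$, and $\sum_{k\ge1}\alpha(k)k^{\rho-1}<\infty$ for the bounded intrinsic dimensionality $\rho$. (A4) Growth: a constant $C$ independent of $N,T$ bounds, for every $(i,t)$, the number of $(i',t')$ at $\mathrm{dist}=0$ by $C$ and at $\mathrm{dist}=d\ge1$ by $Cd^{\rho-1}$. *)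

From Stdlib Require Import Reals.
From HB Require Import structures.
From mathcomp Require Import all_boot.
Set Implicit Arguments. Unset Strict Implicit. Unset Printing Implicit Defensive.

Local Open Scope R_scope.

(* A datacube: for each pair-feature s, the pair (n(s), n^+(s)). *)
Definition cube (S : finType) := {ffun S -> nat * nat}.

(* Hops ignore edge direction. *)
Definition und N (G : rel 'I_N) : rel 'I_N := fun i j => G i j || G j i.

Definition nbhd N (G : rel 'I_N) (i : 'I_N) : {set 'I_N} :=
  [set j | [|| j == i, und G i j | [exists k, und G i k && und G k j]]].

Definition n_cnt N (S : finType) (G : nat -> rel 'I_N) (f : nat -> 'I_N -> 'I_N -> S)
  (i : 'I_N) (t : nat) (s : S) : nat :=
  #|[set jk : 'I_N * 'I_N | [&& jk.1 \in nbhd (G t) i, jk.2 \in nbhd (G t) i,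
                               jk.1 != jk.2 & f t jk.1 jk.2 == s]]|.

Definition nplus N (S : finType) (G : nat -> rel 'I_N) (f : nat -> 'I_N -> 'I_N -> S)
  (i : 'I_N) (t : nat) (s : S) : nat :=
  #|[set jk : 'I_N * 'I_N | [&& jk.1 \in nbhd (G t) i, jk.2 \in nbhd (G t) i,
                               jk.1 != jk.2, f t jk.1 jk.2 == s & G t.+1 jk.1 jk.2]]|.

Definition datacube N (S : finType) (G : nat -> rel 'I_N) (f : nat -> 'I_N -> 'I_N -> S)
  (i : 'I_N) (t : nat) : cube S :=
  [ffun s => (n_cnt G f i t.-1 s, nplus G f i t.-1 s)].

Definition Esp (Om : finType) (P : Om -> R) (X : Om -> R) : R :=
  \big[Rplus/0]_(w : Om) (P w * X w).

Definition Prob (Om : finType) (P : Om -> R) (A : pred Om) : R :=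
  \big[Rplus/0]_(w : Om | A w) P w.

Definition is_prob (Om : finType) (P : Om -> R) : Prop :=
  (forall w, 0 <= P w) /\ \big[Rplus/0]_(w : Om) P w = 1.

Definition Rltb (x y : R) : bool := if Rlt_dec x y then true else false.

Definition gpdf (m v x : R) : R := exp (- ((x - m) ^ 2) / (2 * v)) / sqrt (2 * PI * v).

(* TV distance between N(m1,v1) and N(m2,v2), v1,v2 > 0:
   (1/2) * integral over R of |pdf1 - pdf2| (as limit of integrals over [-k,k]). *)
Definition tv_gauss_is (m1 v1 m2 v2 d : R) : Prop :=
  exists pr : forall k : nat,
      Riemann_integrable (fun x => Rabs (gpdf m1 v1 x - gpdf m2 v2 x)) (- INR k) (INR k),
    Un_cv (fun k => RiemannInt (pr k)) (2 * d).

(* d is the TV distance between N(p1, p1(1-p1)/n1) and N(p2, p2(1-p2)/n2),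
   p_j = k_j / n_j; a zero variance means a Dirac mass; n = 0 (no pair, p undefined)
   is treated as a separate "empty" law (at TV distance 1 from every other law). *)
Definition tv_is (n1 k1 n2 k2 : nat) (d : R) : Prop :=
  match n1, n2 with
  | O, O => d = 0
  | O, _ => d = 1
  | _, O => d = 1
  | _, _ =>
    let p1 := INR k1 / INR n1 in let p2 := INR k2 / INR n2 in
    let v1 := p1 * (1 - p1) / INR n1 in let v2 := p2 * (1 - p2) / INR n2 in
    if Req_EM_T v1 0 then
      (if Req_EM_T v2 0 then d = (if Req_EM_T p1 p2 then 0 else 1) else d = 1)
    else if Req_EM_T v2 0 then d = 1 else tv_gauss_is p1 v1 p2 v2 d
  end.

Definition D_is (S : finType) (h h' : cube S) (dv : R) : Prop :=
  exists ds : S -> R,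
    (forall s, tv_is (h s).1 (h s).2 (h' s).1 (h' s).2 (ds s)) /\
    dv = \big[Rplus/0]_(s : S) ds s.

Definition Kb (S : finType) (D : cube S -> cube S -> R) (b : R) (h h' : cube S) : R :=
  Rpower b (D h h').

Definition hhat N T p (S : finType) (G : nat -> rel 'I_N) (f : nat -> 'I_N -> 'I_N -> S)
  (D : cube S -> cube S -> R) (b : R) (s : S) (hq : cube S) : R :=
  / (INR N * (INR T - INR p - 2)) *
  \big[Rplus/0]_(p <= t < T.-1) \big[Rplus/0]_(i < N)
     (Kb D b (datacube G f i t) hq * INR (nplus G f i t.+1 s)).

Definition fhat N T p (S : finType) (G : nat -> rel 'I_N) (f : nat -> 'I_N -> 'I_N -> S)
  (D : cube S -> cube S -> R) (b : R) (s : S) (hq : cube S) : R :=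
  / (INR N * (INR T - INR p - 2)) *
  \big[Rplus/0]_(p <= t < T.-1) \big[Rplus/0]_(i < N)
     (Kb D b (datacube G f i t) hq * INR (n_cnt G f i t.+1 s)).

(* Node (i,t) of the stacked graph of G_0..G_T. *)
Definition sadj N T (G : nat -> rel 'I_N) (u v : 'I_N * nat) : Prop :=
  (u.2 <= T)%N /\ (v.2 <= T)%N /\
  ((u.2 = v.2 /\ und (G u.2) u.1 v.1) \/ (u.1 = v.1 /\ (v.2 = u.2.+1 \/ u.2 = v.2.+1))).

Fixpoint within N T (G : nat -> rel 'I_N) (n : nat) (u v : 'I_N * nat) : Prop :=
  match n with
  | O => u = v
  | n'.+1 => within T G n' u v \/ exists w, sadj T G u w /\ within T G n' w v
  end.

(* nodes of the datacube of (i,t): N_{t-1}(i) at times t-1 and t *)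
Definition footprint N (G : nat -> rel 'I_N) (x u : 'I_N * nat) : Prop :=
  u.1 \in nbhd (G x.2.-1) x.1 /\ (u.2 = x.2.-1 \/ u.2 = x.2).

(* dist(x,y) >= k, for every realization of positive probability *)
Definition dist_ge N T (Om : finType) (P : Om -> R) (G : Om -> nat -> rel 'I_N)
  (x y : 'I_N * nat) (k : nat) : Prop :=
  forall w, 0 < P w -> forall u v l, footprint (G w) x u -> footprint (G w) y v ->
    (l < k)%N -> ~ within T (G w) l u v.

Definition dist_eq N T (Om : finType) (P : Om -> R) (G : Om -> nat -> rel 'I_N)
  (x y : 'I_N * nat) (d : nat) : Prop :=
  dist_ge T P G x y d /\ ~ dist_ge T P G x y d.+1.

(* datacube indices (i,t) for which datacube and associated counts exist *)
Definition valid N T (x : 'I_N * nat) : Prop := (1 <= x.2)%N /\ (x.2 + 2 <= T)%N.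

(* F(i,t)-measurable event: a function of the datacube of (i,t) and its counts
   (n_{i,t+1}(s), n^+_{i,t+1}(s))_s, i.e. of datacube (i,t+2). *)
Definition Fmeas N (S : finType) (Om : finType) (G : Om -> nat -> rel 'I_N)
  (f : Om -> nat -> 'I_N -> 'I_N -> S) (x : 'I_N * nat) (A : pred Om) : Prop :=
  forall w w',
    (datacube (G w) (f w) x.1 x.2, datacube (G w) (f w) x.1 x.2.+2) =
    (datacube (G w') (f w') x.1 x.2, datacube (G w') (f w') x.1 x.2.+2) ->
    A w = A w'.

(* Writing Ef = E[f^] and Eh = E[h^], the bias is B = Eh/Ef - g, so that
     g^ - g - B = h^/f^ - Eh/Ef = ((h^ - Eh) Ef - Eh (f^ - Ef)) / (f^ Ef).
   Both estimators are normalised sums c0 * sum_x Z_x of bounded summands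
   Z_x = K_b(h_x, h_q) * count_x, and each Z_x takes finitely many values, on
   events of the sigma-field F(x) of (A3).  So Var = c0^2 sum_{x,y} Cov(Z_x, Z_y)
   is bounded through (A3) by c0^2 sum_{x,y} alpha(dist(x,y)); grouping the y
   by their distance to x (truncated at a cut-off K) and counting them with
   (A4) gives Var <= 4 L alpha(K) + O(1/(NT)) with L independent of (N,T),
   which is small for K and then NT large.  Chebyshev's inequality for f^ and
   h^ concludes. *)

From Stdlib Require Import Reals.
From HB Require Import structures.
From mathcomp Require Import all_boot.
From Stdlib Require Import Lra ClassicalEpsilon.
From mathcomp Require Import zify.
Set Warnings "-notation-overridden -redundant-canonical-projection".
Set Implicit Arguments. Unset Strict Implicit.
Local Open Scope R_scope.

(* Real addition and multiplication as monoid laws, so that the generic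
   bigop lemmas (exchange_big, big_mkcond, ...) apply to the
   sums \big[Rplus/0] used in the definitions. *)
HB.instance Definition _ := Monoid.isComLaw.Build R 0 Rplus
  (fun a b c => esym (Rplus_assoc a b c)) Rplus_comm Rplus_0_l.
HB.instance Definition _ := Monoid.isMulLaw.Build R 0 Rmult Rmult_0_l Rmult_0_r.
HB.instance Definition _ :=
  Monoid.isAddLaw.Build R Rmult Rplus Rmult_plus_distr_r Rmult_plus_distr_l.

(* Distributivity and additivity restated with Rmult and Rplus themselves: the
   generic lemmas leave monoid-law wrappers on which ring and lra fail. *)
Lemma sum_mulr (I : Type) (r : seq I) (P : pred I) (a : R) (F : I -> R) :
  a * \big[Rplus/0]_(i <- r | P i) F i = \big[Rplus/0]_(i <- r | P i) (a * F i).
Proof. exact: big_distrr. Qed.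

Lemma sum_mull (I : Type) (r : seq I) (P : pred I) (a : R) (F : I -> R) :
  \big[Rplus/0]_(i <- r | P i) F i * a = \big[Rplus/0]_(i <- r | P i) (F i * a).
Proof. exact: big_distrl. Qed.

Lemma sum_add (I : Type) (r : seq I) (P : pred I) (F G : I -> R) :
  \big[Rplus/0]_(i <- r | P i) (F i + G i) =
  \big[Rplus/0]_(i <- r | P i) F i + \big[Rplus/0]_(i <- r | P i) G i.
Proof. exact: big_split. Qed.

Lemma sum_opp (I : Type) (r : seq I) (P : pred I) (F : I -> R) :
  \big[Rplus/0]_(i <- r | P i) (- F i) = - \big[Rplus/0]_(i <- r | P i) F i.
Proof. by rewrite (big_morph Ropp Ropp_plus_distr Ropp_0). Qed.

Lemma sum_le (I : eqType) (r : seq I) (P : pred I) (F G : I -> R) :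
  (forall i, i \in r -> P i -> F i <= G i) ->
  \big[Rplus/0]_(i <- r | P i) F i <= \big[Rplus/0]_(i <- r | P i) G i.
Proof.
move=> FG; rewrite big_seq_cond [X in _ <= X]big_seq_cond.
apply: (big_ind2 (fun x y => x <= y)) => [|x1 x2 y1 y2|i /andP[]]; by [lra | auto].
Qed.

Lemma sum_const (I : Type) (r : seq I) (P : pred I) (c : R) :
  \big[Rplus/0]_(i <- r | P i) c = INR (count P r) * c.
Proof.
elim: r => [|x r IH]; rewrite ?big_nil ?big_cons /=; first ring.
by case: (P x); rewrite IH ?add1n ?add0n ?S_INR; ring.
Qed.

Lemma size_index_enum (J : finType) : size (index_enum J) = #|J|.
Proof. by rewrite cardT enumT /index_enum locked_withE. Qed.

Lemma sum_pick (e K : nat) (F : nat -> R) :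
  \big[Rplus/0]_(0 <= d < K) (if e == d then F d else 0) = if (e < K)%N then F e else 0.
Proof.
elim: K => [|K IH]; first by rewrite big_nil.
rewrite big_nat_recr //= IH ltnS.
case: (ltngtP e K) => [h|h|->]; rewrite ?ltnn ?eqxx; try ring.
Qed.

Section FiniteProbability.
Variables (Om : finType) (P : Om -> R).
Hypothesis HP : is_prob P.

Definition indb (b : bool) : R := if b then 1 else 0.

Definition Cov (X Y : Om -> R) : R :=
  Esp P (fun w => (X w - Esp P X) * (Y w - Esp P Y)).
Definition Var (X : Om -> R) : R := Esp P (fun w => (X w - Esp P X) ^ 2).

Lemma P_ge0 w : 0 <= P w. Proof. by case: HP. Qed.

Lemma exists_pos : exists w, 0 < P w.
Proof.
case: HP => _ H1; apply: NNPP => hn.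
suff : \big[Rplus/0]_(w : Om) P w <= \big[Rplus/0]_(w : Om) 0 by rewrite sum_const; lra.
apply: sum_le => w _ _; apply: Rnot_lt_le => hw; apply: hn; by exists w.
Qed.

Lemma Esp_ext (X Y : Om -> R) : (forall w, 0 < P w -> X w = Y w) -> Esp P X = Esp P Y.
Proof.
move=> H; apply: eq_bigr => w _.
by case: (Rle_lt_or_eq_dec _ _ (P_ge0 w)) => [/H ->|<-]; last ring.
Qed.

Lemma Esp_le (X Y : Om -> R) : (forall w, 0 < P w -> X w <= Y w) -> Esp P X <= Esp P Y.
Proof.
move=> H; apply: sum_le => w _ _.
case: (Rle_lt_or_eq_dec _ _ (P_ge0 w)) => [/H h|<-]; last lra.
apply: Rmult_le_compat_l => //; exact: P_ge0.
Qed.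

Lemma Esp_add (X Y : Om -> R) : Esp P (fun w => X w + Y w) = Esp P X + Esp P Y.
Proof. rewrite /Esp -sum_add /=; apply: eq_bigr => w _; ring. Qed.

Lemma Esp_scal (c : R) (X : Om -> R) : Esp P (fun w => c * X w) = c * Esp P X.
Proof. rewrite /Esp sum_mulr /=; apply: eq_bigr => w _; ring. Qed.

Lemma Esp_const (c : R) : Esp P (fun _ => c) = c.
Proof. rewrite /Esp -sum_mull /=; case: HP => _ ->; ring. Qed.

Lemma Esp_sum (J : Type) (r : seq J) (Z : J -> Om -> R) :
  Esp P (fun w => \big[Rplus/0]_(x <- r) Z x w) = \big[Rplus/0]_(x <- r) Esp P (Z x).
Proof. by rewrite /Esp; under eq_bigr do rewrite sum_mulr; rewrite exchange_big. Qed.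

Lemma Esp_ind (A : pred Om) : Esp P (fun w => indb (A w)) = Prob P A.
Proof.
rewrite /Esp /Prob [RHS]big_mkcond; apply: eq_bigr => w _.
by rewrite /indb; case: (A w); ring.
Qed.

Lemma Esp_simple (J : finType) (a : J -> R) (E : J -> pred Om) (X : Om -> R) :
  (forall w, 0 < P w -> X w = \big[Rplus/0]_(j : J) (a j * indb (E j w))) ->
  Esp P X = \big[Rplus/0]_(j : J) (a j * Prob P (E j)).
Proof.
move=> HX; rewrite (Esp_ext HX) Esp_sum; apply: eq_bigr => j _.
by rewrite Esp_scal Esp_ind.
Qed.

Lemma cov_expand (X Y : Om -> R) :
  Cov X Y = Esp P (fun w => X w * Y w) - Esp P X * Esp P Y.
Proof.
rewrite /Cov; set ex := Esp P X; set ey := Esp P Y.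
rewrite (Esp_ext (Y := fun w => X w * Y w + (- ex * Y w + (- ey * X w + ex * ey))));
  last by move=> w _; ring.
by rewrite !Esp_add !Esp_scal Esp_const -/ex -/ey; ring.
Qed.

Lemma var_sum (J : Type) (r : seq J) (c0 : R) (Z : J -> Om -> R) :
  Var (fun w => c0 * \big[Rplus/0]_(x <- r) Z x w) =
  c0 ^ 2 * \big[Rplus/0]_(x <- r) \big[Rplus/0]_(y <- r) Cov (Z x) (Z y).
Proof.
rewrite /Var Esp_scal Esp_sum.
rewrite (Esp_ext (Y := fun w => c0 ^ 2 * \big[Rplus/0]_(x <- r) \big[Rplus/0]_(y <- r)
      ((Z x w - Esp P (Z x)) * (Z y w - Esp P (Z y))))); last first.
  move=> w _; rewrite -Rmult_minus_distr_l.
  have -> : \big[Rplus/0]_(x <- r) Z x w - \big[Rplus/0]_(x <- r) Esp P (Z x) =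
            \big[Rplus/0]_(x <- r) (Z x w - Esp P (Z x)) by rewrite sum_add sum_opp.
  rewrite Rpow_mult_distr /= !Rmult_1_r sum_mull; congr (_ * _).
  by apply: eq_bigr => x _; rewrite sum_mulr.
rewrite Esp_scal Esp_sum; congr (_ * _); apply: eq_bigr => x _.
by rewrite Esp_sum.
Qed.

Lemma cov_simple (J : finType) (a b : J -> R) (E F : J -> pred Om) (X Y : Om -> R) :
  (forall w, 0 < P w -> X w = \big[Rplus/0]_(j : J) (a j * indb (E j w))) ->
  (forall w, 0 < P w -> Y w = \big[Rplus/0]_(k : J) (b k * indb (F k w))) ->
  Cov X Y = \big[Rplus/0]_(j : J) \big[Rplus/0]_(k : J)
     (a j * b k * (Prob P (predI (E j) (F k)) - Prob P (E j) * Prob P (F k))).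
Proof.
move=> HX HY.
have EXY : Esp P (fun w => X w * Y w) = \big[Rplus/0]_(j : J) \big[Rplus/0]_(k : J)
             (a j * b k * Prob P (predI (E j) (F k))).
  rewrite (Esp_ext (Y := fun w => \big[Rplus/0]_(j : J) \big[Rplus/0]_(k : J)
            (a j * b k * indb (predI (E j) (F k) w)))); last first.
    move=> w Pw; rewrite (HX w Pw) (HY w Pw) sum_mull; apply: eq_bigr => j _.
    rewrite sum_mulr; apply: eq_bigr => k _.
    by rewrite /indb /=; case: (E j w); case: (F k w) => /=; ring.
  rewrite Esp_sum; apply: eq_bigr => j _; rewrite Esp_sum; apply: eq_bigr => k _.
  by rewrite Esp_scal Esp_ind.
rewrite cov_expand EXY (Esp_simple HX) (Esp_simple HY) sum_mull /Rminus -sum_opp -sum_add.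
apply: eq_bigr => j _; rewrite /= sum_mulr -sum_opp -sum_add.
by apply: eq_bigr => k _ /=; ring.
Qed.

Lemma cov_simple_bound (J : finType) (a b : J -> R) (E F : J -> pred Om)
    (X Y : Om -> R) (A beta : R) :
  (forall w, 0 < P w -> X w = \big[Rplus/0]_(j : J) (a j * indb (E j w))) ->
  (forall w, 0 < P w -> Y w = \big[Rplus/0]_(k : J) (b k * indb (F k w))) ->
  (forall j, Rabs (a j) <= A) -> (forall k, Rabs (b k) <= A) ->
  (forall j k, Rabs (Prob P (predI (E j) (F k)) - Prob P (E j) * Prob P (F k)) <= beta) ->
  Cov X Y <= INR #|J| ^ 2 * A ^ 2 * beta.
Proof.
move=> HX HY Ha Hb Hev; rewrite (cov_simple HX HY).
have -> : INR #|J| ^ 2 * A ^ 2 * beta =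
          \big[Rplus/0]_(j : J) \big[Rplus/0]_(k : J) (A * A * beta).
  by rewrite !sum_const !count_predT size_index_enum; ring.
apply: sum_le => j _ _; apply: sum_le => k _ _.
apply: Rle_trans (Rle_abs _) _; rewrite !Rabs_mult.
have hd := Rabs_pos (Prob P (predI (E j) (F k)) - Prob P (E j) * Prob P (F k)).
have := Hev j k; have := Ha j; have := Hb k; have := Rabs_pos (a j); have := Rabs_pos (b k).
move: (Rabs (a j)) (Rabs (b k)) hd => u v hd hv hu hua hvb hdb.
apply: Rmult_le_compat; nra.
Qed.

Lemma var_sum_bound (X : eqType) (r : seq X) (J : finType) (Z : X -> Om -> R)
    (a : J -> R) (E : X -> J -> pred Om) (A c0 : R) (bnd : X -> X -> R) :
  (forall x, x \in r -> forall w, 0 < P w ->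
       Z x w = \big[Rplus/0]_(j : J) (a j * indb (E x j w))) ->
  (forall j, Rabs (a j) <= A) ->
  (forall x y, x \in r -> y \in r -> forall j k,
      Rabs (Prob P (predI (E x j) (E y k)) - Prob P (E x j) * Prob P (E y k)) <= bnd x y) ->
  Var (fun w => c0 * \big[Rplus/0]_(x <- r) Z x w) <=
  c0 ^ 2 * \big[Rplus/0]_(x <- r) \big[Rplus/0]_(y <- r) (INR #|J| ^ 2 * A ^ 2 * bnd x y).
Proof.
move=> Hrep Ha Hmix; rewrite var_sum.
apply: Rmult_le_compat_l; first exact: pow2_ge_0.
apply: sum_le => x hx _; apply: sum_le => y hy _.
exact: (cov_simple_bound (Hrep x hx) (Hrep y hy) Ha Ha (Hmix x y hx hy)).
Qed.

Lemma chebyshev2 (A : pred Om) (X Y : Om -> R) (eta : R) :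
  0 < eta ->
  (forall w, A w -> eta <= Rabs (X w - Esp P X) \/ eta <= Rabs (Y w - Esp P Y)) ->
  Prob P A <= (Var X + Var Y) / eta ^ 2.
Proof.
move=> heta HA; have he2 : 0 < eta ^ 2 by apply: pow_lt.
rewrite -Esp_ind /Rdiv Rmult_comm /Var -Esp_add -Esp_scal.
apply: Esp_le => w _.
have hX := pow2_ge_0 (X w - Esp P X); have hY := pow2_ge_0 (Y w - Esp P Y).
have hi : 0 < / eta ^ 2 by apply: Rinv_0_lt_compat.
rewrite /indb; case: (boolP (A w)) => [/HA hw|_]; last nra.
suff : eta ^ 2 <= (X w - Esp P X) ^ 2 + (Y w - Esp P Y) ^ 2.
  move=> h; apply: (Rmult_le_reg_l (eta ^ 2)) => //.
  rewrite -Rmult_assoc Rinv_r; lra.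
case: hw => h.
- have : eta ^ 2 <= Rabs (X w - Esp P X) ^ 2 by apply: pow_incr; lra.
  rewrite pow2_abs; lra.
- have : eta ^ 2 <= Rabs (Y w - Esp P Y) ^ 2 by apply: pow_incr; lra.
  rewrite pow2_abs; lra.
Qed.

End FiniteProbability.

Lemma within_time N T (G : nat -> rel 'I_N) l (u v : 'I_N * nat) :
  within T G l u v -> (v.2 <= u.2 + l)%N /\ (u.2 <= v.2 + l)%N.
Proof.
elim: l u => [|l IH] u /=; first by move=> ->; rewrite !addn0.
case=> [/IH [h1 h2]|[w [Hs /IH [h1 h2]]]]; first by rewrite !addnS; lia.
by move: h1 h2; case: Hs => _ [_ [[-> _]|[_ [->|->]]]]; lia.
Qed.

Lemma within_chain N T (G : nat -> rel 'I_N) (i : 'I_N) l a :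
  (a + l <= T)%N -> within T G l (i, a) (i, (a + l)%N).
Proof.
elim: l a => [|l IH] a /= H; first by rewrite addn0.
right; exists (i, a.+1); split; first by split; [|split; [|right; split; [|left]]] => //=; lia.
by rewrite addnS -addSn; apply: IH; lia.
Qed.

Definition decide (Q : Prop) : bool := if excluded_middle_informative Q then true else false.

Lemma decideP (Q : Prop) : reflect Q (decide Q).
Proof. by rewrite /decide; case: excluded_middle_informative => h; constructor. Qed.

Section NodeHistory.
Variables (N T : nat) (Om : finType) (P : Om -> R) (G : Om -> nat -> rel 'I_N).

Lemma history_far (i : 'I_N) k : dist_ge T P G (i, 1%N) (i, (k + 2)%N) k.
Proof.
move=> w _ u v l [_ Hu] [_ Hv] Hl /within_time [h1 _].
by case: Hu => /= Hu; case: Hv => /= Hv; rewrite Hu Hv in h1; lia.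
Qed.

(* ... and exactly k, since node i joins them through its own history. *)
Lemma history_near (i : 'I_N) k :
  is_prob P -> (k + 4 <= T)%N -> ~ dist_ge T P G (i, 1%N) (i, (k + 2)%N) k.+1.
Proof.
move=> /exists_pos [w Pw] HT H.
apply: (H w Pw (i, 1%N) (i, (1 + k)%N) k).
- by split; [rewrite /nbhd inE /= eqxx | right].
- by split; [rewrite /nbhd inE /= eqxx | left => /=; lia].
- exact: ltnSn.
- by apply: within_chain; lia.
Qed.

(* Truncated distance: the least d < K for which dist(x,y) >= d+1 fails (so that
   dist(x,y) = d), or K if there is none; dist(x,y) >= dist_cut K x y always. *)
Definition dist_cut (K : nat) (x y : 'I_N * nat) : nat :=
  find (fun d => ~~ decide (dist_ge T P G x y d.+1)) (iota 0 K).

Lemma dist_cut_le K x y : (dist_cut K x y <= K)%N.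
Proof. by rewrite /dist_cut -[X in (_ <= X)%N](size_iota 0 K) find_size. Qed.

Lemma dist_cut_ge K x y : dist_ge T P G x y (dist_cut K x y).
Proof.
case e: (dist_cut K x y) => [|d]; first by move=> w _ u v l _ _.
have hd : (d < dist_cut K x y)%N by rewrite e.
have hK : (d < K)%N by have := dist_cut_le K x y; rewrite e; lia.
by have := before_find 0%N hd; rewrite nth_iota // add0n => /negbFE /decideP.
Qed.

Lemma dist_cut_eq K x y : (dist_cut K x y < K)%N -> dist_eq T P G x y (dist_cut K x y).
Proof.
move=> h; split; first exact: dist_cut_ge.
have hs : has (fun d => ~~ decide (dist_ge T P G x y d.+1)) (iota 0 K)
  by rewrite has_find size_iota.
by have := nth_find 0%N hs; rewrite -/(dist_cut K x y) nth_iota // add0n => /decideP.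
Qed.

End NodeHistory.

Lemma RiemannInt_ge0 (F : R -> R) a b (pr : Riemann_integrable F a b) :
  a <= b -> (forall x, 0 <= F x) -> 0 <= RiemannInt pr.
Proof.
move=> hab hF.
have := RiemannInt_P19 (RiemannInt_P14 a b 0) pr hab (fun x _ => hF x).
by rewrite RiemannInt_P15 Rmult_0_l.
Qed.

Lemma tv_nonneg n1 k1 n2 k2 d : tv_is n1 k1 n2 k2 d -> 0 <= d.
Proof.
rewrite /tv_is; case: n1 => [|n1]; case: n2 => [|n2]; try (move=> ->; lra).
repeat (case: Req_dec_T => _ /=); try (move=> ->; lra).
case=> pr Hcv; suff : 0 <= 2 * d by lra.
have cv0 : Un_cv (fun _ => 0) 0.
  by move=> e he; exists 0%N => n _; rewrite /R_dist Rminus_0_r Rabs_R0.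
refine (Rle_cv_lim _ cv0 Hcv) => k.
apply: RiemannInt_ge0 => [|x]; [have := pos_INR k; lra | exact: Rabs_pos].
Qed.

Lemma D_nonneg (S : finType) (h h' : cube S) dv : D_is h h' dv -> 0 <= dv.
Proof.
case=> ds [Hds ->]; apply: (big_ind (fun x => 0 <= x)) => [|x y|s _]; first lra.
- by move=> *; lra.
- exact: tv_nonneg (Hds s).
Qed.

Lemma Rpower_1_base x : Rpower 1 x = 1.
Proof. by rewrite /Rpower ln_1 Rmult_0_r exp_0. Qed.

Lemma Rpower_in01 b d : 0 < b < 1 -> 0 <= d -> 0 <= Rpower b d <= 1.
Proof.
move=> hb hd; split; first by apply: Rlt_le; apply: exp_pos.
rewrite -(Rpower_1_base d).
apply: Rle_Rpower_l; lra.
Qed.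

Lemma Rpower_ge1 x y : 1 <= x -> 0 <= y -> 1 <= Rpower x y.
Proof. by move=> hx hy; rewrite -(Rpower_O x); [apply: Rle_Rpower | lra]. Qed.

(* If C k^(rho-1) >= 1 for all k >= 1, then rho >= 1: (A4) applied to single
   neighbours at every distance forces the growth exponent to be at least 1. *)
Lemma growth_exponent_ge1 C rho :
  (forall k : nat, (1 <= k)%N -> 1 <= C * Rpower (INR k) (rho - 1)) -> 1 <= rho.
Proof.
(* For rho < 1, C k^(rho-1) < 1 as soon as k > C^(1/(1-rho)). *)
move=> H; apply: Rnot_lt_le => hr.
have hC : 1 <= C by have := H 1%N isT; rewrite /= Rpower_1_base Rmult_1_r.
have [n hn] := INR_archimed 1 (Rpower C (/ (1 - rho))) Rlt_0_1.
rewrite Rmult_1_r in hn.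
have eC : Rpower (Rpower C (/ (1 - rho))) (1 - rho) = C.
  by rewrite Rpower_mult Rinv_l ?Rpower_1; lra.
have hk : C < Rpower (INR n.+1) (1 - rho).
  rewrite -{1}eC; apply: Rlt_Rpower_l; first lra.
  by split; [apply: exp_pos | rewrite S_INR; lra].
have := H n.+1 isT; rewrite -(Ropp_minus_distr 1 rho) Rpower_Ropp.
have hp : 0 < Rpower (INR n.+1) (1 - rho) by apply: exp_pos.
have : C * / Rpower (INR n.+1) (1 - rho) < 1.
  apply: (Rmult_lt_reg_r (Rpower (INR n.+1) (1 - rho))) => //.
  by rewrite Rmult_assoc Rinv_l; lra.
lra.
Qed.

(* The bound of (A4) on the number of datacubes at distance d from a given one. *)
Definition growth_bound (C rho : R) (d : nat) : R :=
  if d == 0%N then C else C * Rpower (INR d) (rho - 1).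

Lemma big_sum_f (u : nat -> R) n : \big[Rplus/0]_(0 <= d < n.+1) u d = sum_f_R0 u n.
Proof.
elim: n => [|n IH]; first by rewrite big_nat1.
by rewrite big_nat_recr //= IH.
Qed.

Lemma sum_by_level (X : eqType) (r : seq X) (kd : X -> nat) (K : nat)
    (alpha bnd : nat -> R) :
  (forall y, (kd y <= K)%N) -> (forall k, 0 <= alpha k) ->
  (forall d, (d < K)%N -> INR (count (fun y => kd y == d) r) <= bnd d) ->
  \big[Rplus/0]_(y <- r) alpha (kd y) <=
  INR (size r) * alpha K + \big[Rplus/0]_(0 <= d < K) (alpha d * bnd d).
Proof.
move=> Hk Ha Hc.
have Hlev : forall y, alpha (kd y) <=
    alpha K + \big[Rplus/0]_(0 <= d < K) (if kd y == d then alpha d else 0).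
  move=> y; rewrite sum_pick; have := Ha K.
  by case: ltngtP (Hk y) => // [h _|-> _]; lra.
apply: Rle_trans (sum_le (P := xpredT) (fun y _ _ => Hlev y)) _.
rewrite sum_add sum_const count_predT; apply: Rplus_le_compat_l.
rewrite exchange_big; apply: sum_le => d; rewrite mem_index_iota => /andP [_ hd] _.
rewrite -big_mkcond sum_const; have := Hc d hd; have := Ha d; nra.
Qed.

Section MixingSeries.
Variables (alpha : nat -> R) (rho C l : R).
Hypothesis alpha_ge0 : forall k, 0 <= alpha k.
Hypothesis rho_ge1 : 1 <= rho.
Hypothesis series_cv :
  Un_cv (fun n => sum_f_R0 (fun k => alpha k.+1 * Rpower (INR k.+1) (rho - 1)) n) l.

Let u k := alpha k.+1 * Rpower (INR k.+1) (rho - 1).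

Lemma mixing_term_ge_alpha k : alpha k.+1 <= u k.
Proof.
rewrite /u; have := alpha_ge0 k.+1.
have : 1 <= Rpower (INR k.+1) (rho - 1).
  by apply: Rpower_ge1; [rewrite S_INR; have := pos_INR k | ]; lra.
nra.
Qed.

Lemma mixing_term_ge0 k : 0 <= u k.
Proof. by have := mixing_term_ge_alpha k; have := alpha_ge0 k.+1; lra. Qed.

Lemma series_limit_ge0 : 0 <= l.
Proof.
apply: Rle_trans (@sum_incr _ 0%N _ series_cv mixing_term_ge0); exact: mixing_term_ge0.
Qed.

(* The terms of a convergent series tend to 0, hence alpha(K) -> 0. *)
Lemma alpha_small eps : 0 < eps -> exists K : nat, alpha K <= eps.
Proof.
move=> he; have [n Hn] := @series_cv (eps / 2) ltac:(lra).
exists n.+2.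
have := Hn n (le_n n); have := Hn n.+1 (le_S _ _ (le_n n)).
rewrite /R_dist /= -/(u n.+1) => /Rabs_def2 [h1 h1'] /Rabs_def2 [h2 h2'].
have := mixing_term_ge_alpha n.+1; lra.
Qed.

Lemma weighted_mixing_le K :
  0 <= C -> \big[Rplus/0]_(0 <= d < K) (alpha d * growth_bound C rho d) <=
            alpha 0%N * C + C * l.
Proof.
move=> hC; case: K => [|K]; rewrite ?big_nil.
  by have := series_limit_ge0; have := alpha_ge0 0%N; nra.
rewrite big_nat_recl //= /growth_bound eqxx; apply: Rplus_le_compat_l.
have -> : \big[Rplus/0]_(0 <= d < K) (alpha d.+1 * (C * Rpower (INR d.+1) (rho - 1))) =
          C * \big[Rplus/0]_(0 <= d < K) u d.
  by rewrite sum_mulr; apply: eq_bigr => d _; rewrite /u; ring.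
apply: Rmult_le_compat_l => //; apply: Rle_trans (@sum_incr _ K _ series_cv mixing_term_ge0).
have := mixing_term_ge0 K; rewrite -big_sum_f big_nat_recr // /u /=; lra.
Qed.

End MixingSeries.

Lemma simple_repr (J : finType) (K : eqType) (code : J -> K) (phi : K -> R) (k : K) :
  injective code -> (exists j, code j = k) ->
  phi k = \big[Rplus/0]_(j : J) (phi (code j) * indb (k == code j)).
Proof.
move=> inj [j0 <-]; rewrite (bigD1 j0) //= /indb eqxx big1 => [|j hj]; first ring.
by rewrite (inj_eq inj) eq_sym (negbTE hj); ring.
Qed.

(* Truncation of a real to [0, A]; it keeps the coefficients of the simple
   functions below uniformly bounded, even on codes of impossible values. *)
Definition clamp (A v : R) : R := Rmax 0 (Rmin v A).

Lemma clamp_id A v : 0 <= v <= A -> clamp A v = v.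
Proof. by move=> hv; rewrite /clamp Rmin_left ?Rmax_right; lra. Qed.

Lemma clamp_bound A v : 0 <= A -> Rabs (clamp A v) <= A.
Proof.
move=> hA; rewrite /clamp Rabs_pos_eq; last exact: Rmax_l.
by apply: Rmax_lub => //; exact: Rmin_r.
Qed.

Section CubeCodes.
Variables (S : finType) (n : nat).

(* Codes for pairs (datacube, count) with all entries at most n. *)
Definition code := ({ffun S -> 'I_n.+1 * 'I_n.+1} * 'I_n.+1)%type.

Definition decode (j : code) : cube S * nat :=
  ([ffun s => (nat_of_ord (j.1 s).1, nat_of_ord (j.1 s).2)], nat_of_ord j.2).

Lemma decode_inj : injective decode.
Proof.
move=> [c m] [c' m'] [/ffunP e em]; congr (_, _); last exact: val_inj.
apply/ffunP => s; have := e s; rewrite !ffunE.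
by case: (c s) (c' s) => [a1 a2] [b1 b2] [/val_inj -> /val_inj ->].
Qed.

Lemma decode_onto (h : cube S) (m : nat) :
  (forall s, ((h s).1 <= n)%N /\ ((h s).2 <= n)%N) -> (m <= n)%N ->
  exists j, decode j = (h, m).
Proof.
move=> Hh Hm; exists ([ffun s => (inord (h s).1, inord (h s).2)], inord m).
rewrite /decode /= inordK ?ltnS //; congr (_, _); apply/ffunP => s.
by rewrite !ffunE /= !inordK ?ltnS; [case: (h s) | case: (Hh s) | case: (Hh s)].
Qed.

End CubeCodes.

Lemma n_cnt_le (S : finType) N (G : nat -> rel 'I_N) (f : nat -> 'I_N -> 'I_N -> S)
    i t s M :
  (#|nbhd (G t) i| <= M)%N -> (n_cnt G f i t s <= M * M)%N.
Proof.
move=> H; apply: leq_trans (leq_mul H H); rewrite -cardsX; apply: subset_leq_card.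
by apply/subsetP => -[j k]; rewrite !inE => /and4P [-> -> _ _].
Qed.

Lemma nplus_le (S : finType) N (G : nat -> rel 'I_N) (f : nat -> 'I_N -> 'I_N -> S)
    i t s M :
  (#|nbhd (G t) i| <= M)%N -> (nplus G f i t s <= M * M)%N.
Proof.
move=> H; apply: leq_trans (leq_mul H H); rewrite -cardsX; apply: subset_leq_card.
by apply/subsetP => -[j k]; rewrite !inE => /and5P [-> -> _ _ _].
Qed.

Section Estimator.
Variables (S : finType) (N T p : nat) (Om : finType) (P : Om -> R)
  (G : Om -> nat -> rel 'I_N) (f : Om -> nat -> 'I_N -> 'I_N -> S)
  (D : cube S -> cube S -> R) (b : R) (s : S) (hq : cube S).

Definition index_set : seq ('I_N * nat) :=
  [seq (i, t) | t <- index_iota p T.-1, i <- index_enum 'I_N].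

Definition norm_const : R := / (INR N * (INR T - INR p - 2)).

(* The summand of an estimator, whose count is read off by pr from the datacube
   two steps later; pr = fst gives fhat and pr = snd gives hhat. *)
Definition summand (pr : nat * nat -> nat) (x : 'I_N * nat) (w : Om) : R :=
  Kb D b (datacube (G w) (f w) x.1 x.2) hq *
  INR (pr (datacube (G w) (f w) x.1 x.2.+2 s)).

Definition estimator (pr : nat * nat -> nat) (w : Om) : R :=
  norm_const * \big[Rplus/0]_(x <- index_set) summand pr x w.

Lemma fhat_estimator w : fhat T p (G w) (f w) D b s hq = estimator fst w.
Proof.
rewrite /fhat /estimator /index_set big_allpairs_dep; congr (_ * _).
by apply: eq_bigr => t _; apply: eq_bigr => i _; rewrite /summand ffunE.
Qed.

Lemma hhat_estimator w : hhat T p (G w) (f w) D b s hq = estimator snd w.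
Proof.
rewrite /hhat /estimator /index_set big_allpairs_dep; congr (_ * _).
by apply: eq_bigr => t _; apply: eq_bigr => i _; rewrite /summand ffunE.
Qed.

Lemma index_set_valid x : (1 <= p)%N -> x \in index_set -> valid T x.
Proof.
move=> hp.
case/allpairsP => -[t i] [/= + _ ->]; rewrite mem_index_iota => /andP [h1 h2].
by rewrite /valid /=; split; lia.
Qed.

Lemma index_set_uniq : uniq index_set.
Proof.
apply: allpairs_uniq; [exact: iota_uniq | exact: index_enum_uniq |].
by move=> [t i] [t' i'] _ _ /= [-> ->].
Qed.

Lemma index_set_size : size index_set = ((T.-1 - p) * N)%N.
Proof. by rewrite size_allpairs size_iota size_index_enum card_ord. Qed.

Lemma norm_const_bounds : (1 <= N)%N -> (p + 3 <= T)%N ->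
  0 < norm_const /\ norm_const * INR (size index_set) <= 2 /\
  norm_const <= INR (p + 3) / INR (N * T).
Proof.
move=> hN hT; rewrite index_set_size /norm_const.
have [a eT] : exists a, T = (a + p + 3)%N by exists (T - (p + 3))%N; lia.
have hN' : 1 <= INR N by apply: (le_INR 1); apply/leP.
have ha := pos_INR a; have hp := pos_INR p.
have haN := Rmult_le_pos _ _ (pos_INR N) ha.
have -> : INR N * (INR T - INR p - 2) = INR N * (INR a + 1).
  by rewrite eT !plus_INR /=; ring.
have -> : INR ((T.-1 - p) * N) = (INR a + 2) * INR N.
  by rewrite (_ : ((T.-1 - p) * N = (a + 2) * N)%N) ?mult_INR ?plus_INR /=; [ring | lia].
have -> : INR (N * T) = INR N * (INR a + INR p + 3).
  by rewrite eT mult_INR !plus_INR /=; ring.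
have hd : 0 < INR N * (INR a + 1) by nra.
split; first exact: Rinv_0_lt_compat.
split; apply: (Rmult_le_reg_l (INR N * (INR a + 1))) => //.
- by rewrite -Rmult_assoc Rinv_r; nra.
- rewrite Rinv_r; last lra.
  apply: (Rmult_le_reg_r (INR N * (INR a + INR p + 3))); first nra.
  rewrite /Rdiv !Rmult_assoc Rinv_l ?plus_INR /=; last nra.
  have := Rmult_le_pos _ _ haN hp; nra.
Qed.

Variables (pr : nat * nat -> nat) (M : nat).
Hypothesis HP : is_prob P.
Hypothesis p_ge1 : (1 <= p)%N.
Hypothesis pr_le : forall c, (pr c <= maxn c.1 c.2)%N.
Hypothesis nbhd_le :
  forall w, 0 < P w -> forall i t, (t <= T)%N -> (#|nbhd (G w t) i| <= M)%N.
Hypothesis b01 : 0 < b < 1.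
Hypothesis D_ge0 :
  forall w x, 0 < P w -> valid T x -> 0 <= D (datacube (G w) (f w) x.1 x.2) hq.

Let A := INR (M * M).

Lemma datacube_le w (i : 'I_N) t : 0 < P w -> (t <= T.+1)%N ->
  forall s', ((datacube (G w) (f w) i t s').1 <= M * M)%N /\
             ((datacube (G w) (f w) i t s').2 <= M * M)%N.
Proof.
move=> Pw ht s'; rewrite ffunE /=.
by split; [apply: n_cnt_le | apply: nplus_le]; apply: nbhd_le => //; lia.
Qed.

Lemma count_le w x : 0 < P w -> valid T x ->
  (pr (datacube (G w) (f w) x.1 x.2.+2 s) <= M * M)%N.
Proof.
move=> Pw [_ hx]; apply: leq_trans (pr_le _) _.
have ht : (x.2.+2 <= T.+1)%N by lia.
by have [h1 h2] := datacube_le x.1 Pw ht s; rewrite geq_max h1.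
Qed.

Lemma summand_bound x w : 0 < P w -> valid T x -> 0 <= summand pr x w <= A.
Proof.
move=> Pw vx; rewrite /summand /Kb.
have [k0 k1] := Rpower_in01 b01 (D_ge0 Pw vx).
have hc : INR (pr (datacube (G w) (f w) x.1 x.2.+2 s)) <= A.
  by apply: le_INR; apply/leP; exact: count_le.
have := pos_INR (pr (datacube (G w) (f w) x.1 x.2.+2 s)); split; nra.
Qed.

Lemma estimator_bound w : (1 <= N)%N -> (p + 3 <= T)%N -> 0 < P w ->
  0 <= estimator pr w <= 2 * A.
Proof.
move=> hN hT Pw; have [hc [hcm _]] := norm_const_bounds hN hT.
have hA : 0 <= A by apply: pos_INR.
have hs : \big[Rplus/0]_(x <- index_set) 0 <=
          \big[Rplus/0]_(x <- index_set) summand pr x w <=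
          \big[Rplus/0]_(x <- index_set) A.
  by split; apply: sum_le => x hx _; have := summand_bound Pw (index_set_valid p_ge1 hx); lra.
rewrite !sum_const count_predT Rmult_0_r in hs; rewrite /estimator; split; first nra.
by apply: Rle_trans (Rmult_le_compat_l _ _ _ (Rlt_le _ _ hc) (proj2 hs)) _; nra.
Qed.

(* The level sets of the summand at x: the events {key_x = decode j}, where the
   key records the datacube at x and the count read two steps later. *)
Definition level_key (x : 'I_N * nat) (w : Om) : cube S * nat :=
  (datacube (G w) (f w) x.1 x.2, pr (datacube (G w) (f w) x.1 x.2.+2 s)).

Definition level (x : 'I_N * nat) (j : code S (M * M)) : pred Om :=
  fun w => level_key x w == decode j.

Definition level_value (j : code S (M * M)) : R :=
  clamp A (Rpower b (D (decode j).1 hq) * INR (decode j).2).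

Lemma summand_simple x w : valid T x -> 0 < P w ->
  summand pr x w = \big[Rplus/0]_(j : code S (M * M)) (level_value j * indb (level x j w)).
Proof.
move=> vx Pw.
pose phi (k : cube S * nat) := clamp A (Rpower b (D k.1 hq) * INR k.2).
have -> : summand pr x w = phi (level_key x w).
  by rewrite /phi clamp_id //; exact: summand_bound.
apply: simple_repr; first exact: decode_inj.
apply: decode_onto; last exact: count_le.
by apply: datacube_le => //; case: vx; lia.
Qed.

Lemma level_meas x j : Fmeas G f x (level x j).
Proof. by move=> w w' [e1 e2]; rewrite /level /level_key e1 e2. Qed.

Variables (alpha : nat -> R) (rho C l : R) (K : nat).
Hypothesis mixing : forall x y k, valid T x -> valid T y -> dist_ge T P G x y k ->
  forall A B : pred Om, Fmeas G f x A -> Fmeas G f y B ->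
  Rabs (Prob P (predI A B) - Prob P A * Prob P B) <= alpha k.
Hypothesis growth : forall x, valid T x -> forall d (X : seq ('I_N * nat)), uniq X ->
  (forall y, y \in X -> valid T y /\ dist_eq T P G x y d) ->
  INR (size X) <= growth_bound C rho d.
Hypothesis alpha_ge0 : forall k, 0 <= alpha k.
Hypothesis rho_ge1 : 1 <= rho.
Hypothesis C_ge0 : 0 <= C.
Hypothesis series_cv :
  Un_cv (fun n => sum_f_R0 (fun k => alpha k.+1 * Rpower (INR k.+1) (rho - 1)) n) l.

Let L := INR #|{: code S (M * M)}| ^ 2 * A ^ 2.
Let Q := alpha 0%N * C + C * l.

Lemma mixing_row_sum x : x \in index_set ->
  \big[Rplus/0]_(y <- index_set) alpha (dist_cut T P G K x y) <=
  INR (size index_set) * alpha K + Q.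
Proof.
move=> hx.
apply: Rle_trans (sum_by_level (K := K) (bnd := growth_bound C rho) _ alpha_ge0 _) _.
- by move=> y; exact: dist_cut_le.
- move=> d hd; rewrite -size_filter.
  apply: growth (index_set_valid p_ge1 hx) _ _ (filter_uniq _ index_set_uniq) _.
  move=> y; rewrite mem_filter => /andP [/eqP e hy].
  split; first exact: index_set_valid p_ge1 hy.
  by rewrite -e; apply: dist_cut_eq; rewrite e.
- apply: Rplus_le_compat_l; exact: weighted_mixing_le.
Qed.

Lemma estimator_var_le :
  Var P (estimator pr) <=
  norm_const ^ 2 * INR (size index_set) * (L * (INR (size index_set) * alpha K + Q)).
Proof.
rewrite /estimator.
apply: Rle_trans (var_sum_bound HP (bnd := fun x y => alpha (dist_cut T P G K x y)) norm_const
  (fun x hx w Pw => summand_simple (index_set_valid p_ge1 hx) Pw) _ _) _.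
- by move=> j; apply: clamp_bound; apply: pos_INR.
- move=> x y hx hy j k; apply: mixing; try exact: level_meas.
  + exact: index_set_valid p_ge1 hx.
  + exact: index_set_valid p_ge1 hy.
  + exact: dist_cut_ge.
rewrite Rmult_assoc; apply: Rmult_le_compat_l; first exact: pow2_ge_0.
rewrite -/L -[X in _ <= X * _]Rmult_1_r -count_predT -sum_const.
rewrite sum_mull; apply: sum_le => x hx _; rewrite Rmult_1_l -sum_mulr.
apply: Rmult_le_compat_l; first by apply: Rmult_le_pos; apply: pow2_ge_0.
exact: mixing_row_sum.
Qed.

Lemma estimator_var_asymptotic : (1 <= N)%N -> (p + 3 <= T)%N ->
  Var P (estimator pr) <= 4 * L * alpha K + 2 * L * Q * (INR (p + 3) / INR (N * T)).
Proof.
move=> hN hT; have [hc [hcm hcT]] := norm_const_bounds hN hT.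
apply: Rle_trans estimator_var_le _.
have hL : 0 <= L by apply: Rmult_le_pos; apply: pow2_ge_0.
have hQ : 0 <= Q.
  have := series_limit_ge0 alpha_ge0 rho_ge1 series_cv; have := alpha_ge0 0%N.
  by rewrite /Q; nra.
have haK := alpha_ge0 K; have hm := pos_INR (size index_set).
set m := INR (size index_set) in hcm hm *.
have -> : norm_const ^ 2 * m * (L * (m * alpha K + Q)) =
          L * alpha K * ((norm_const * m) * (norm_const * m)) +
          L * Q * (norm_const * m) * norm_const by ring.
have h1 : (norm_const * m) * (norm_const * m) <= 4.
  have : 0 <= norm_const * m by apply: Rmult_le_pos; lra.
  nra.
have h2 : L * Q * (norm_const * m) * norm_const <= L * Q * 2 * norm_const.
  apply: Rmult_le_compat_r; [lra | apply: Rmult_le_compat_l; [nra | lra]].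
have hLa : 0 <= L * alpha K by nra.
have hLQ : 0 <= L * Q by nra.
nra.
Qed.

End Estimator.

Lemma ratio_close (fh hh Ef Eh g c eps eta A : R) :
  0 < c -> c <= Ef -> 0 <= Eh <= 2 * A -> 0 < eta -> eta <= c / 2 ->
  eta * (2 * c + 4 * A) <= eps * (c * c) ->
  Rabs (fh - Ef) < eta -> Rabs (hh - Eh) < eta ->
  0 < fh /\ Rabs (hh / fh - g - (Eh - g * Ef) / Ef) <= eps.
Proof.
move=> hc hEf hEh heta heta2 hkey /Rabs_def2 [hf1 hf2] /Rabs_def2 [hh1 hh2].
have hfh : c / 2 < fh by lra.
split; first lra.
have -> : hh / fh - g - (Eh - g * Ef) / Ef =
          ((hh - Eh) * Ef - Eh * (fh - Ef)) / (fh * Ef) by field; lra.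
have hnum : Rabs ((hh - Eh) * Ef - Eh * (fh - Ef)) <= eta * (Ef + 2 * A).
  apply: Rle_trans (Rabs_triang _ _) _; rewrite Rabs_Ropp !Rabs_mult.
  rewrite (Rabs_pos_eq Ef) ?(Rabs_pos_eq Eh); try lra.
  have h1 : Rabs (hh - Eh) <= eta by apply: Rabs_le; lra.
  have h2 : Rabs (fh - Ef) <= eta by apply: Rabs_le; lra.
  have := Rabs_pos (hh - Eh); have := Rabs_pos (fh - Ef); nra.
have hsmall : eta * (Ef + 2 * A) <= eps * (fh * Ef).
  have hA : 0 <= A by lra.
  have heps : 0 <= eps by nra.
  have k1 : eta * (2 * c + 4 * A) * (Ef / 2) <= eps * (c * c) * (Ef / 2).
    by apply: Rmult_le_compat_r; lra.
  have k2 : A * eta * c <= A * eta * Ef by apply: Rmult_le_compat_l; nra.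
  have h3 : c * (eta * (Ef + 2 * A)) <= c * (eps * c * Ef / 2) by nra.
  have h4 : eta * (Ef + 2 * A) <= eps * c * Ef / 2 by apply: (Rmult_le_reg_l c).
  have k3 : eps * Ef * (c / 2) <= eps * Ef * fh by apply: Rmult_le_compat_l; nra.
  nra.
rewrite /Rdiv Rabs_mult Rabs_inv (Rabs_pos_eq (fh * Ef)); last nra.
apply: (Rmult_le_reg_r (fh * Ef)); first nra.
rewrite Rmult_assoc Rinv_l; nra.
Qed.

Lemma deviation_radius (c eps A : R) : 0 < c -> 0 < eps -> 0 <= A ->
  exists eta, [/\ 0 < eta, eta <= c / 2 & eta * (2 * c + 4 * A) <= eps * (c * c)].
Proof.
move=> hc heps hA; exists (Rmin (c / 2) (eps * (c * c) / (2 * c + 4 * A))).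
have hq : 0 < eps * (c * c) / (2 * c + 4 * A).
  by apply: Rdiv_lt_0_compat; [apply: Rmult_lt_0_compat; nra | lra].
split; [by apply: Rmin_glb_lt; lra | exact: Rmin_l |].
apply: Rle_trans (Rmult_le_compat_r _ _ _ _ (Rmin_r _ _)) _; first lra.
by rewrite /Rdiv Rmult_assoc Rinv_l; lra.
Qed.

Lemma bad_event_deviation (fh hh Ef Eh g c eps eta A : R) :
  0 < c -> c <= Ef -> 0 <= Eh <= 2 * A -> 0 < eta -> eta <= c / 2 ->
  eta * (2 * c + 4 * A) <= eps * (c * c) ->
  ~~ Rltb 0 fh || Rltb eps (Rabs (hh / fh - g - (Eh - g * Ef) / Ef)) ->
  eta <= Rabs (fh - Ef) \/ eta <= Rabs (hh - Eh).
Proof.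
move=> hc hEf hEh heta heta2 hkey hbad.
case: (Rlt_or_le (Rabs (fh - Ef)) eta) => [h1|]; last by left.
case: (Rlt_or_le (Rabs (hh - Eh)) eta) => [h2|]; last by right.
have [hpos hclose] := ratio_close g hc hEf hEh heta heta2 hkey h1 h2.
by move: hbad; rewrite /Rltb; case: Rlt_dec => //= _; case: Rlt_dec => //=; lra.
Qed.

Lemma eventually_small (q V : R) : 0 < V ->
  exists M0 : nat, (1 <= M0)%N /\ forall n : nat, (M0 <= n)%N -> q / INR n <= V.
Proof.
move=> hV; have [m hm] := INR_archimed V q hV.
exists m.+1; split => // n hn.
have hn' : INR m.+1 <= INR n by apply: le_INR; apply/leP.
have hm1 : 0 < INR m.+1 by apply: lt_0_INR; lia.
apply: (Rmult_le_reg_r (INR n)); first lra.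
rewrite /Rdiv Rmult_assoc Rinv_l; last lra.
rewrite S_INR in hn' hm1; have := pos_INR m; nra.
Qed.

Unset Implicit Arguments.

Section Families.
Variables (S : finType) (p : nat) (Om : nat -> nat -> finType)
  (P : forall N T : nat, Om N T -> R)
  (G : forall N T : nat, Om N T -> nat -> rel 'I_N)
  (f : forall N T : nat, Om N T -> nat -> 'I_N -> 'I_N -> S)
  (D : cube S -> cube S -> R) (b : nat -> nat -> R) (s : S) (hq : cube S)
  (alpha : nat -> R) (rho C l : R) (M : nat).

Definition possible (h : cube S) : Prop :=
  exists N T (w : Om N T) (x : 'I_N * nat),
    valid T x /\ 0 < P N T w /\ datacube (G N T w) (f N T w) x.1 x.2 = h.

Hypothesis HP : forall N T, is_prob (P N T).
Hypothesis p_ge1 : (1 <= p)%N.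
Hypothesis D_is_tv : forall h h', possible h -> possible h' -> D_is h h' (D h h').
Hypothesis hq_possible : possible hq.
Hypothesis nbhd_le : forall N T (w : Om N T), 0 < P N T w ->
  forall (i : 'I_N) t, (t <= T)%N -> (#|nbhd (G N T w t) i| <= M)%N.
Hypothesis b01 : forall N T, 0 < b N T < 1.
Hypothesis mixing : forall N T (x y : 'I_N * nat) (k : nat), valid T x -> valid T y ->
  dist_ge T (P N T) (G N T) x y k ->
  forall A B : pred (Om N T), Fmeas (G N T) (f N T) x A -> Fmeas (G N T) (f N T) y B ->
  Rabs (Prob (P N T) (predI A B) - Prob (P N T) A * Prob (P N T) B) <= alpha k.
Hypothesis series_cv :
  Un_cv (fun n => sum_f_R0 (fun k => alpha k.+1 * Rpower (INR k.+1) (rho - 1)) n) l.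
Hypothesis growth : forall N T (x : 'I_N * nat), valid T x ->
  forall (d : nat) (X : seq ('I_N * nat)), uniq X ->
  (forall y, y \in X -> valid T y /\ dist_eq T (P N T) (G N T) x y d) ->
  INR (size X) <= growth_bound C rho d.

Lemma kernel_dist_ge0 N T (w : Om N T) x : 0 < P N T w -> valid T x ->
  0 <= D (datacube (G N T w) (f N T w) x.1 x.2) hq.
Proof.
move=> Pw vx; apply: D_nonneg (D_is_tv _ _ _ hq_possible).
by exists N, T, w, x.
Qed.

(* The constants of (A3) and (A4) have the expected signs; this follows from
   the assumptions applied to the history of a single node. *)
Lemma mixing_coeff_ge0 k : 0 <= alpha k.
Proof.
have vx : valid (k + 4) (@ord0 0, 1%N) by rewrite /valid /=; split; lia.
have vy : valid (k + 4) (@ord0 0, (k + 2)%N) by rewrite /valid /=; split; lia.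
have := mixing 1%N (k + 4)%N _ _ k vx vy (@history_far _ _ _ _ _ _ _) predT predT
  (fun _ _ _ => erefl) (fun _ _ _ => erefl).
by apply: Rle_trans; exact: Rabs_pos.
Qed.

Lemma growth_rho_ge1 : 1 <= rho.
Proof.
apply: (growth_exponent_ge1 (C := C)) => k hk.
have vx : valid (k + 4) (@ord0 0, 1%N) by rewrite /valid /=; split; lia.
have vy : valid (k + 4) (@ord0 0, (k + 2)%N) by rewrite /valid /=; split; lia.
have := growth 1%N (k + 4)%N _ vx k [:: (@ord0 0, (k + 2)%N)] isT.
rewrite /growth_bound (negbTE (lt0n_neq0 hk)); apply => y; rewrite inE => /eqP ->.
split => //; split; first exact: history_far.
by apply: history_near => //; lia.
Qed.

Lemma growth_const_ge0 : 0 <= C.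
Proof.
have vx : valid 3 (@ord0 0, 1%N) by rewrite /valid /=; split; lia.
by have := growth 1%N 3%N _ vx 0%N [::] isT; apply.
Qed.

Let est N T (pr : nat * nat -> nat) :=
  estimator T p (G N T) (f N T) D (b N T) s hq pr.

Lemma estimator_mean_bound N T (pr : nat * nat -> nat) :
  (forall c, (pr c <= maxn c.1 c.2)%N) -> (1 <= N)%N -> (p + 3 <= T)%N ->
  0 <= Esp (P N T) (est N T pr) <= 2 * INR (M * M).
Proof.
move=> hpr hN hT; have bnd := estimator_bound s p_ge1 hpr (nbhd_le N T)
  (b01 N T) (kernel_dist_ge0 N T) hN hT.
split.
- rewrite -(Esp_const (HP N T) 0); apply: (Esp_le (HP N T)) => w Pw.
  exact: (proj1 (bnd w Pw)).
- rewrite -(Esp_const (HP N T) (2 * _)); apply: (Esp_le (HP N T)) => w Pw.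
  exact: (proj2 (bnd w Pw)).
Qed.

Lemma estimator_var_small V : 0 < V -> exists M0 : nat, forall N T,
  (M0 <= N * T)%N -> (p + 3 <= T)%N -> (1 <= N)%N /\
  forall pr : nat * nat -> nat, (forall c, (pr c <= maxn c.1 c.2)%N) ->
    Var (P N T) (est N T pr) <= V.
Proof.
move=> hV.
set L := INR #|{: code S (M * M)}| ^ 2 * INR (M * M) ^ 2.
have hL : 0 <= L by apply: Rmult_le_pos; apply: pow2_ge_0.
have [K hK] := alpha_small mixing_coeff_ge0 growth_rho_ge1 series_cv
  (Rdiv_lt_0_compat V (8 * L + 1) hV ltac:(lra)).
have [M0 [hM0 HM0]] := eventually_small
  (2 * L * (alpha 0%N * C + C * l) * INR (p + 3)) (ltac:(lra) : 0 < V / 2).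
exists M0 => N T hNT hT; have hN : (1 <= N)%N by case: N hNT; rewrite ?mul0n; lia.
split => // pr hpr.
apply: Rle_trans (estimator_var_asymptotic s (HP N T) p_ge1 hpr (nbhd_le N T)
  (b01 N T) (kernel_dist_ge0 N T) K (mixing N T) (growth N T) mixing_coeff_ge0
  growth_rho_ge1 growth_const_ge0 series_cv hN hT) _.
rewrite -/L; have h1 : 4 * L * alpha K <= V / 2.
  apply: Rle_trans (Rmult_le_compat_l _ _ _ _ hK) _; first lra.
  apply: (Rmult_le_reg_r (8 * L + 1)); first lra.
  rewrite Rmult_assoc /Rdiv (Rmult_assoc V) Rinv_l; lra.
have := HM0 _ hNT; rewrite /Rdiv; lra.
Qed.

End Families.

Arguments estimator_mean_bound {S p Om P G f D b s hq M}.
Arguments estimator_var_small {S p Om P G f D b s hq alpha rho C l M}.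

Theorem theorem3
  (S : finType) (p : nat) (hp : (1 <= p)%N)
  (Om : nat -> nat -> finType)
  (P : forall N T : nat, Om N T -> R)
  (G : forall N T : nat, Om N T -> nat -> rel 'I_N)
  (f : forall N T : nat, Om N T -> nat -> 'I_N -> 'I_N -> S)
  (g : S -> cube S -> R)
  (D : cube S -> cube S -> R)
  (b : nat -> nat -> R)
  (rho : R)
  (s : S) (hq : cube S)
  (* probability laws *)
  (HP : forall N T, is_prob (P N T))
  (* g takes values in [0,1] *)
  (Hg : forall s' h, 0 <= g s' h <= 1)
  (* D(h,h') is the sum of TV distances between the Gaussians, on possible datacubes,
     and D(h,h') = 0 iff h = h' there *)
  (Hposs_D : forall h h',
      (exists N T (w : Om N T) (x : 'I_N * nat),
          valid T x /\ 0 < P N T w /\ datacube (G N T w) (f N T w) x.1 x.2 = h) ->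
      (exists N T (w : Om N T) (x : 'I_N * nat),
          valid T x /\ 0 < P N T w /\ datacube (G N T w) (f N T w) x.1 x.2 = h') ->
      D_is h h' (D h h') /\ (D h h' = 0 <-> h = h'))
  (* h_q is a possible datacube *)
  (Hhq : exists N T (w : Om N T) (x : 'I_N * nat),
          valid T x /\ 0 < P N T w /\ datacube (G N T w) (f N T w) x.1 x.2 = hq)
  (* model (M) *)
  (HM : forall N T (i : 'I_N) t, valid T (i, t) -> forall s' (h : cube S) (m : nat),
      \big[Rplus/0]_(w : Om N T | (datacube (G N T w) (f N T w) i t == h)
                                && (n_cnt (G N T w) (f N T w) i t.+1 s' == m))
          (P N T w * INR (nplus (G N T w) (f N T w) i t.+1 s'))
      = INR m * g s' h *
        Prob (P N T) (fun w => (datacube (G N T w) (f N T w) i t == h)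
                             && (n_cnt (G N T w) (f N T w) i t.+1 s' == m)))
  (* (A1) *)
  (HA1 : exists M : nat, forall N T (w : Om N T), 0 < P N T w ->
      forall (i : 'I_N) t, (t <= T)%N -> (#|nbhd (G N T w t) i| <= M)%N)
  (* (A2) *)
  (Hb01 : forall N T, 0 < b N T < 1)
  (HA2 : forall eps, 0 < eps -> exists M : nat, forall N T, (M <= N * T)%N -> b N T < eps)
  (* (A3) strong mixing *)
  (HA3 : exists alpha : nat -> R,
      (forall N T (x y : 'I_N * nat) (k : nat), valid T x -> valid T y ->
         dist_ge T (P N T) (G N T) x y k ->
         forall A B : pred (Om N T),
           Fmeas (G N T) (f N T) x A -> Fmeas (G N T) (f N T) y B ->
           Rabs (Prob (P N T) (predI A B) - Prob (P N T) A * Prob (P N T) B) <= alpha k) /\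
      (exists l, Un_cv (fun n => sum_f_R0
                   (fun k => alpha k.+1 * Rpower (INR k.+1) (rho - 1)) n) l))
  (* (A4) growth *)
  (HA4 : exists C : R, forall N T (x : 'I_N * nat), valid T x ->
      forall (d : nat) (X : seq ('I_N * nat)), uniq X ->
        (forall y, y \in X -> valid T y /\ dist_eq T (P N T) (G N T) x y d) ->
        INR (size X) <= (if d == 0%N then C else C * Rpower (INR d) (rho - 1)))
  (* liminf E[fhat] > 0 *)
  (Hliminf : exists c, 0 < c /\ exists M : nat, forall N T,
      (M <= N * T)%N -> (p + 3 <= T)%N ->
      c <= Esp (P N T) (fun w => fhat T p (G N T w) (f N T w) D (b N T) s hq)) :
  (* conclusion: ghat - g - B -> 0 in probability *)
  forall eps delta, 0 < eps -> 0 < delta ->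
  exists M : nat, forall N T, (M <= N * T)%N -> (p + 3 <= T)%N ->
    let Eh := Esp (P N T) (fun w => hhat T p (G N T w) (f N T w) D (b N T) s hq) in
    let Ef := Esp (P N T) (fun w => fhat T p (G N T w) (f N T w) D (b N T) s hq) in
    let B := (Eh - g s hq * Ef) / Ef in
    Prob (P N T) (fun w =>
      let fh := fhat T p (G N T w) (f N T w) D (b N T) s hq in
      let hh := hhat T p (G N T w) (f N T w) D (b N T) s hq in
      ~~ Rltb 0 fh || Rltb eps (Rabs (hh / fh - g s hq - B))) <= delta.
Proof.
move=> eps delta heps hdelta.
have [M HM1] := HA1; have [alpha [Hmix [l Hcv]]] := HA3; have [C HC] := HA4.
have [c [hc [Mf HMf]]] := Hliminf.
have [eta [heta heta2 hkey]] := deviation_radius hc heps (pos_INR (M * M)).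
have he2 : 0 < eta ^ 2 by apply: pow_lt.
have HD h h' ph ph' := proj1 (Hposs_D h h' ph ph').
have [MV HMV] := estimator_var_small (s := s) HP hp HD Hhq HM1 Hb01 Hmix Hcv HC
  (delta * eta ^ 2 / 2) ltac:(nra).
exists (maxn Mf MV) => N T hNT hT Eh Ef B.
have [hN Hvar] := HMV N T ltac:(lia) hT.
set est := estimator T p (G N T) (f N T) D (b N T) s hq in Hvar *.
have est_f := fhat_estimator T p (G N T) (f N T) D (b N T) s hq.
have est_h := hhat_estimator T p (G N T) (f N T) D (b N T) s hq.
have eEf : Ef = Esp (P N T) (est fst).
  exact: Esp_ext (HP N T) _ _ (fun w _ => est_f w).
have eEh : Eh = Esp (P N T) (est snd).
  exact: Esp_ext (HP N T) _ _ (fun w _ => est_h w).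
have hEf : c <= Ef by apply: HMf; lia.
have hEh : 0 <= Eh <= 2 * INR (M * M).
  by rewrite eEh; apply: (estimator_mean_bound HP hp HD Hhq HM1 Hb01) => // c';
    exact: leq_maxr.
apply: Rle_trans (chebyshev2 (HP N T) (X := est fst) (Y := est snd) heta _) _.
- move=> w; rewrite /= /B est_f est_h -eEf -eEh.
  exact: (bad_event_deviation hc hEf hEh heta heta2 hkey).
- have := Hvar fst (fun c' => leq_maxl _ _); have := Hvar snd (fun c' => leq_maxr _ _).
  move=> h1 h2; apply: (Rmult_le_reg_r (eta ^ 2)) => //.
  by rewrite /Rdiv Rmult_assoc Rinv_l; lra.
Qed.
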